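(* For every $r\geq 2$ there is a constant $C=C(r)>0$ such that the following holds. Let $H$ be an $r$-uniform hypergraph on $n$ vertices of average degree $d$, and let $p>0$. Then $$n^{r/p}\cdot\lambda_2^{(p)}(H)\geq r\,\mathrm{disc}^{+}(H)-Cd\qquad\text{and}\qquad n^{r/p}\cdot\mu^{(p)}(H)\geq r\,\mathrm{disc}(H)-Cd.$$
   Context: For an $r$-uniform hypergraph $H$ on vertex set $V$ with $|V|=n$, its adjacency map is $\tau_H(x_1,\dots,x_r)=\frac{1}{(r-1)!}\sum x_1(v_1)\cdots x_r(v_r)$, the sum over ordered tuples $(v_1,\dots,v_r)\in V^r$ with $\{v_1,\dots,v_r\}\in E(H)$. The normalized adjacency map is $\sigma_H=\tau_H-\frac{r|E(H)|}{n^r}J$ with $J(x_1,\dots,x_r)=\sum_{v_1,\dots,v_r\in V}x_1(v_1)\cdots x_r(v_r)$. With $\|x\|_p=(\sum_v|x(v)|^p)^{1/p}$, $\lambda_2^{(p)}(H)=\sup_{x\in\mathbb{R}^V,\|x\|_p=1}\sigma_H(x,\dots,x)$ and $\mu^{(p)}(H)=\sup_{\|x_1\|_p=\dots=\|x_r\|_p=1}|\sigma_H(x_1,\dots,x_r)|$. With edge density $q=|E(H)|/\binom{n}{r}$ and $e(U)$ the number of edges inside $U\subset V$, $\mathrm{disc}(U)=e(U)-q\binom{|U|}{r}$, $\mathrm{disc}^{+}(H)=\max_U\mathrm{disc}(U)$, $\mathrm{disc}(H)=\max_U|\mathrm{disc}(U)|$. The average degree is $d=r|E(H)|/n$. *)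

From HB Require Import structures.
From mathcomp Require Import all_boot all_order all_algebra.
From mathcomp Require Import all_classical all_reals.
From mathcomp Require Import exp.
Set Implicit Arguments. Unset Strict Implicit. Unset Printing Implicit Defensive.
Import Order.TTheory GRing.Theory Num.Theory.
Local Open Scope ring_scope.
Local Open Scope classical_set_scope.

Section Hyper.
Variables (R : realType) (V : finType) (r : nat) (E : {set {set V}}).

Definition uniform := forall e, e \in E -> #|e| = r.

Definition nV : R := #|V|%:R.

Definition tau (xs : 'I_r -> V -> R) : R :=
  (((r.-1)`!)%:R)^-1 *
  \sum_(f : {ffun 'I_r -> V} | [set f i | i : 'I_r] \in E) \prod_(i < r) xs i (f i).

Definition Jmap (xs : 'I_r -> V -> R) : R :=
  \sum_(f : {ffun 'I_r -> V}) \prod_(i < r) xs i (f i).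

Definition sigma (xs : 'I_r -> V -> R) : R :=
  tau xs - (r%:R * #|E|%:R / nV ^+ r) * Jmap xs.

Definition lpnorm (p : R) (x : V -> R) : R :=
  (\sum_(v : V) `|x v| `^ p) `^ p^-1.

Definition lambda2 (p : R) : R :=
  sup [set sigma (fun _ => x) | x in [set x : V -> R | lpnorm p x = 1]].

Definition mu (p : R) : R :=
  sup [set `|sigma xs| | xs in
        [set xs : 'I_r -> V -> R | forall i, lpnorm p (xs i) = 1]].

Definition density : R := #|E|%:R / ('C(#|V|, r))%:R.

Definition e_in (U : {set V}) : nat := #|[set e in E | e \subset U]|.

Definition disc (U : {set V}) : R := (e_in U)%:R - density * ('C(#|U|, r))%:R.

(* maximum over all U (U = set0 gives disc = 0, so seed 0 is harmless) *)
Definition discplus : R := \big[Num.max/0]_(U : {set V}) disc U.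
Definition discabs : R := \big[Num.max/0]_(U : {set V}) `|disc U|.

Definition avgdeg : R := r%:R * #|E|%:R / nV.

End Hyper.

From HB Require Import structures.
From mathcomp Require Import all_boot all_order all_algebra.
From mathcomp Require Import all_classical all_reals.
From mathcomp Require Import exp.
From mathcomp Require Import ring lra zify.
Import Order.TTheory GRing.Theory Num.Theory.
Set Implicit Arguments. Unset Strict Implicit. Unset Printing Implicit Defensive.

(* Test sigma_H on the l^p-normalised indicator x = |U|^(-1/p) 1_U of a vertex
   set U.  Each edge inside U contributes r! ordered tuples to tau_H, so
   sigma_H(x,...,x) = |U|^(-r/p) (r e(U) - r |E| |U|^r / n^r), and
   n^(r/p) |U|^(-r/p) >= 1.  Since C(u,r)/C(n,r) lies between ((u-r)/n)^r and
   (u/n)^r, the term |E| (|U|/n)^r exceeds q C(|U|,r) by at most r^2 |E|/n = r d,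
   which gives both bounds with C = r^2.  When the bracket is negative one uses
   n^(r/p) lambda_2 >= 0 instead, which is the case U = V. *)

Lemma ffact_le_expn n m : (n ^_ m <= n ^ m)%N.
Proof.
elim: m => [|m IH]; first by rewrite ffactn0 expn0.
by rewrite ffactnSr expnS mulnC leq_mul ?leq_subr.
Qed.

Lemma expn_subn_le_ffact n m : ((n - m) ^ m <= n ^_ m)%N.
Proof.
elim: m n => [|m IH] n; first by rewrite ffactn0 expn0.
rewrite ffactnS expnS leq_mul ?leq_subr //.
by have -> : (n - m.+1 = n.-1 - m)%N by lia.
Qed.

Lemma ffact_expn_cross u n m :
  (u <= n)%N -> (u ^_ m * n ^ m <= n ^_ m * u ^ m)%N.
Proof.
move=> le_un; elim: m => [|m IH]; first by rewrite !ffactn0 !expn0.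
rewrite !ffactnSr !expnS.
have le_step : ((u - m) * n <= (n - m) * u)%N by nia.
have := leq_mul IH le_step; lia.
Qed.

Lemma bin_expn_cross u n r :
  (u <= n)%N -> ('C(u, r) * n ^ r <= 'C(n, r) * u ^ r)%N.
Proof.
move=> le_un; rewrite -(leq_pmul2r (fact_gt0 r)).
by rewrite mulnAC [X in (_ <= X)%N]mulnAC !bin_ffact ffact_expn_cross.
Qed.

Lemma expn_bin_cross u n r : ((u - r) ^ r * 'C(n, r) <= 'C(u, r) * n ^ r)%N.
Proof.
rewrite -(leq_pmul2r (fact_gt0 r)) -mulnA mulnAC !bin_ffact.
exact: leq_mul (expn_subn_le_ffact u r) (ffact_le_expn n r).
Qed.

Local Open Scope ring_scope.

Lemma subrXX_le (R : realDomainType) (x y z : R) k :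
  0 <= y -> y <= x -> x <= z -> x ^+ k - y ^+ k <= k%:R * (x - y) * z ^+ k.-1.
Proof.
move=> y_ge0 le_yx le_xz.
have x_ge0 : 0 <= x := le_trans y_ge0 le_yx.
have le_pow a j : 0 <= a -> a <= z -> a ^+ j <= z ^+ j.
  by move=> a_ge0 le_az; apply: lerXn2r; rewrite ?nnegrE // (le_trans a_ge0).
rewrite subrXX mulrAC mulrC ler_wpM2r ?subr_ge0 //.
have -> : k%:R * z ^+ k.-1 = \sum_(i < k) z ^+ k.-1.
  by rewrite sumr_const card_ord mulr_natl.
apply: ler_sum => i _.
have -> : z ^+ k.-1 = z ^+ (k.-1 - i) * z ^+ i.
  by rewrite -exprD subnK // -ltnS (leq_trans (ltn_ord i)) // leqSpred.
by rewrite ler_pM ?exprn_ge0 ?le_pow // (le_trans le_yx).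
Qed.

Lemma bin_ratio_le (R : realFieldType) (u n r : nat) : (u <= n)%N ->
  ('C(u, r))%:R / ('C(n, r))%:R <= u%:R ^+ r / n%:R ^+ r :> R.
Proof.
move=> le_un; have [->|Cn_gt0] := posnP 'C(n, r).
  by rewrite invr0 mulr0 divr_ge0 ?exprn_ge0.
have le_rn : (r <= n)%N by rewrite -bin_gt0.
have expn_gt0 : (0 : R) < n%:R ^+ r by rewrite -natrX ltr0n expn_gt0; lia.
rewrite ler_pdivrMr ?ltr0n // mulrAC ler_pdivlMr //.
by rewrite -!natrX -!natrM ler_nat [X in (_ <= X)%N]mulnC bin_expn_cross.
Qed.

Lemma bin_ratio_ge (R : realFieldType) (u n r : nat) :
  (0 < r)%N -> (r <= n)%N -> (u <= n)%N ->
  u%:R ^+ r / n%:R ^+ r - ('C(u, r))%:R / ('C(n, r))%:R <= r%:R ^+ 2 / n%:R :> R.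
Proof.
move=> r_gt0 le_rn le_un.
have n_gt0 : (0 : R) < n%:R by rewrite ltr0n; lia.
have expn_gt0 : (0 : R) < n%:R ^+ r by rewrite exprn_gt0.
have Cn_gt0 : (0 : R) < ('C(n, r))%:R by rewrite ltr0n bin_gt0.
have lower : ((u - r)%N)%:R ^+ r / n%:R ^+ r <= ('C(u, r))%:R / ('C(n, r))%:R :> R.
  rewrite ler_pdivrMr // mulrAC ler_pdivlMr //.
  by rewrite -!natrX -!natrM ler_nat expn_bin_cross.
have gap : u%:R ^+ r - ((u - r)%N)%:R ^+ r <= r%:R * r%:R * n%:R ^+ r.-1 :> R.
  apply: le_trans (subrXX_le r (ler0n _ _) _ (_ : u%:R <= n%:R)) _;
    rewrite ?ler_nat ?leq_subr //.
  rewrite ler_wpM2r ?exprn_ge0 ?ler0n // ler_wpM2l ?ler0n //.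
  by rewrite -natrB ?leq_subr // ler_nat; lia.
apply: le_trans (_ : (u%:R ^+ r - ((u - r)%N)%:R ^+ r) / n%:R ^+ r <= _).
  by rewrite mulrBl lerB.
rewrite ler_pdivrMr // (le_trans gap) //.
have -> : n%:R ^+ r = n%:R * n%:R ^+ r.-1 :> R by rewrite -exprS prednK.
by rewrite mulrA divfK ?gt_eqF // expr2.
Qed.

Lemma normr_sum_le_card (R : numDomainType) (I : finType) (P : pred I) (F : I -> R) :
  (forall i, `|F i| <= 1) -> `|\sum_(i | P i) F i| <= #|I|%:R.
Proof.
move=> F_le1; apply: le_trans (ler_norm_sum _ _ _) _.
rewrite -sumr_const big_mkcond /=; apply: ler_sum => i _.
by case: (P i); rewrite ?inE.
Qed.

Lemma mulr_bigmax_le (R : realFieldType) (I : finType) (F : I -> R) (a c : R) :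
  0 < a -> 0 <= c -> (forall i, a * F i <= c) -> a * \big[Num.max/0]_i F i <= c.
Proof.
move=> a_gt0 c_ge0 aF_le; rewrite mulrC -ler_pdivlMr //.
apply: bigmax_le => [|i _]; first by rewrite divr_ge0 // ltW.
by rewrite ler_pdivlMr // mulrC.
Qed.

Section Hypergraph.
Variables (R : realType) (V : finType) (r : nat) (E : {set {set V}}).
Hypotheses (r_gt0 : (0 < r)%N) (E_uniform : uniform r E).

Definition entries (f : {ffun 'I_r -> V}) : {set V} := [set f i | i : 'I_r].

Lemma card_entries_eq (e : {set V}) :
  #|e| = r -> #|[set f | entries f == e]| = r`!.
Proof.
move=> card_e.
have -> : [set f | entries f == e] = [set f in ffun_on e | injectiveb f].
  apply/setP => f; rewrite !inE.
  apply/eqP/andP => [f_e | [/forallP f_e /injectiveP f_inj]].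
    subst e; split; first by apply/forallP => i; apply: imset_f.
    have /imset_injP f_inj : #|entries f| == #|'I_r| by rewrite card_ord card_e.
    by apply/injectiveP => i j; apply: f_inj.
  apply/eqP; rewrite eqEcard card_imset // card_ord card_e leqnn andbT.
  by apply/fintype.subsetP => _ /imsetP[i _ ->]; apply: f_e.
by rewrite card_inj_ffuns_on card_ord card_e ffactnn.
Qed.

Lemma card_edge_tuples_sub (U : {set V}) :
  #|[set f | (entries f \in E) && (entries f \subset U)]| = (e_in E U * r`!)%N.
Proof.
rewrite -sum1_card (partition_big entries (fun e => (e \in E) && (e \subset U))) /=;
  last by move=> f; rewrite inE.
rewrite /e_in -sum1_card big_distrl /=.
apply: eq_big => [e|e /andP[e_E e_U]]; first by rewrite inE.
rewrite mul1n -(card_entries_eq (E_uniform e_E)) -sum1_card.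
apply: eq_bigl => f; rewrite !inE.
by case: (entries f =P e) => [->|_]; rewrite ?e_E ?e_U ?andbF.
Qed.

Definition scaled_indic (U : {set V}) (c : R) (v : V) : R := if v \in U then c else 0.

Lemma prod_scaled_indic U c (f : {ffun 'I_r -> V}) :
  \prod_(i < r) scaled_indic U c (f i) = if entries f \subset U then c ^+ r else 0.
Proof.
case: ifP => [f_U | /negbT/subsetPn[_ /imsetP[i _ ->] fi_U]].
  rewrite -[r in c ^+ r]card_ord -prodr_const; apply: eq_bigr => i _.
  by rewrite /scaled_indic (fintype.subsetP f_U) ?imset_f.
by rewrite (bigD1 i) //= /scaled_indic (negbTE fi_U) mul0r.
Qed.

Lemma sum_scaled_indic U c : \sum_v scaled_indic U c v = c *+ #|U|.
Proof. by rewrite -sumr_const [RHS]big_mkcond. Qed.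

Definition sigma_indic (U : {set V}) : R :=
  r%:R * (e_in E U)%:R - r%:R * #|E|%:R / nV R V ^+ r * #|U|%:R ^+ r.

Lemma sigma_scaled_indic U c :
  sigma E (fun _ : 'I_r => scaled_indic U c) = c ^+ r * sigma_indic U.
Proof.
have tau_sum : \sum_(f : {ffun 'I_r -> V} | entries f \in E)
    \prod_(i < r) scaled_indic U c (f i) = c ^+ r *+ (e_in E U * r`!).
  rewrite -card_edge_tuples_sub -sumr_const big_mkcond [RHS]big_mkcond /=.
  apply: eq_bigr => f _; rewrite prod_scaled_indic inE.
  by case: (_ \in E); case: (_ \subset U).
have J_sum : \sum_(f : {ffun 'I_r -> V}) \prod_(i < r) scaled_indic U c (f i)
    = (c *+ #|U|) ^+ r.
  by rewrite -sum_scaled_indic -[r in _ ^+ r]card_ord -prodr_const bigA_distr_bigA.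
have tau_indic : ((r.-1)`!)%:R^-1 * (c ^+ r *+ (e_in E U * r`!))
    = c ^+ r * (r%:R * (e_in E U)%:R).
  have -> : r`! = (r * (r.-1)`!)%N by case: (r) r_gt0.
  rewrite mulnA -[c ^+ r *+ _]mulr_natr natrM mulrA mulrC mulfK; last first.
    by rewrite pnatr_eq0 -lt0n fact_gt0.
  by rewrite natrM; ring.
rewrite /sigma /tau /Jmap tau_sum J_sum tau_indic /sigma_indic.
by rewrite -[c *+ _]mulr_natr exprMn; ring.
Qed.

Lemma normr_le1_lpnorm1 (p : R) (x : V -> R) :
  0 < p -> lpnorm p x = 1 -> forall v, `|x v| <= 1.
Proof.
move=> p_gt0 x_unit v.
have sum1 : \sum_w `|x w| `^ p = 1.
  move: (congr1 (fun a => a `^ p) x_unit); rewrite /lpnorm /= powR1 -powRrM.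
  by rewrite mulVf ?lt0r_neq0 // powRr1 // sumr_ge0 // => w _; exact: powR_ge0.
have xv_le1 : `|x v| `^ p <= 1.
  by rewrite -sum1 (bigD1 v) //= lerDl sumr_ge0 // => w _; exact: powR_ge0.
rewrite leNgt; apply/negP => /(gt0_ltr_powR p_gt0); rewrite powR1 ?nnegrE //.
by move=> /(_ ler01 (normr_ge0 _)); rewrite ltNge xv_le1.
Qed.

Lemma sigma_bounded : exists M : R, forall xs : 'I_r -> V -> R,
  (forall i v, `|xs i v| <= 1) -> `|sigma E xs| <= M.
Proof.
exists (((r.-1)`!)%:R^-1 * #|{ffun 'I_r -> V}|%:R
        + `|r%:R * #|E|%:R / nV R V ^+ r| * #|{ffun 'I_r -> V}|%:R).
move=> xs xs_le1.
have prod_le1 (f : {ffun 'I_r -> V}) : `|\prod_(i < r) xs i (f i)| <= 1.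
  by rewrite normr_prod prodr_ile1 // => i _; rewrite normr_ge0 xs_le1.
apply: le_trans (ler_normB _ _) _; apply: lerD.
  by rewrite normrM ger0_norm ?invr_ge0 // ler_wpM2l ?invr_ge0 ?normr_sum_le_card.
by rewrite normrM ler_wpM2l ?normr_sum_le_card.
Qed.

Lemma sigma_le_lambda2 (p : R) (x : V -> R) :
  0 < p -> lpnorm p x = 1 -> sigma E (fun _ : 'I_r => x) <= lambda2 r E p.
Proof.
move=> p_gt0 x_unit; apply: ub_le_sup; last by exists x.
have [M sigma_le] := sigma_bounded.
exists M => _ [y y_unit <-]; apply: le_trans (ler_norm _) (sigma_le _ _) => _.
exact: normr_le1_lpnorm1 y_unit.
Qed.

Lemma normr_sigma_le_mu (p : R) (xs : 'I_r -> V -> R) :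
  0 < p -> (forall i, lpnorm p (xs i) = 1) -> `|sigma E xs| <= mu r E p.
Proof.
move=> p_gt0 xs_unit; apply: ub_le_sup; last by exists xs.
have [M sigma_le] := sigma_bounded.
exists M => _ [ys ys_unit <-]; apply: sigma_le => i.
exact: normr_le1_lpnorm1 (ys_unit i).
Qed.

Lemma avgdeg_ge0 : 0 <= avgdeg R r E.
Proof. by rewrite /avgdeg /nV divr_ge0 ?mulr_ge0 ?ler0n. Qed.

Lemma density_bin_le (U : {set V}) :
  density R r E * ('C(#|U|, r))%:R <= #|E|%:R / nV R V ^+ r * #|U|%:R ^+ r.
Proof.
rewrite /density -!mulrA ler_wpM2l // [X in X <= _]mulrC [X in _ <= X]mulrC.
exact: bin_ratio_le (max_card _).
Qed.

Lemma density_bin_ge (U : {set V}) :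
  #|E|%:R / nV R V ^+ r * #|U|%:R ^+ r - density R r E * ('C(#|U|, r))%:R
    <= r%:R * avgdeg R r E.
Proof.
have [E0 | E_gt0] := posnP #|E|.
  by rewrite /density /avgdeg E0 !mul0r subrr mulr0 mul0r mulr0.
have /card_gt0P[e e_E] := E_gt0.
have le_rn : (r <= #|V|)%N by rewrite -(E_uniform e_E) max_card.
have := ler_wpM2l (ler0n R #|E|) (bin_ratio_ge R r_gt0 le_rn (max_card U)).
rewrite /density /avgdeg /nV; lra.
Qed.

Lemma disc_le_sigma_indic (U : {set V}) :
  r%:R * disc R r E U - r%:R ^+ 2 * avgdeg R r E <= sigma_indic U.
Proof.
have := ler_wpM2l (ler0n R r) (density_bin_ge U).
rewrite /disc /sigma_indic; lra.
Qed.

Lemma normr_disc_le_sigma_indic (U : {set V}) :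
  r%:R * `|disc R r E U| - r%:R ^+ 2 * avgdeg R r E <= `|sigma_indic U|.
Proof.
have [disc_ge0 | disc_lt0] := leP 0 (disc R r E U).
  by rewrite ger0_norm // (le_trans (disc_le_sigma_indic U)) ?ler_norm.
have := ler_wpM2l (ler0n R r) (density_bin_le U).
have := mulr_ge0 (mulr_ge0 (ler0n R r) (ler0n R r)) avgdeg_ge0.
rewrite ltr0_norm // -normrN /disc /sigma_indic => Cd_ge0 q_le.
apply: le_trans (ler_norm _); lra.
Qed.

Lemma sigma_indic_card0 (U : {set V}) : #|U| = 0%N -> sigma_indic U = 0.
Proof.
move=> U0; have no_edges : e_in E U = 0%N.
  apply/eqP; rewrite cards_eq0; apply/eqP/setP => e.
  rewrite !inE (cards0_eq U0) finset.subset0.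
  apply/negbTE/andP => -[/E_uniform card_e /eqP e0].
  by rewrite e0 cards0 in card_e; lia.
by rewrite /sigma_indic no_edges U0 expr0n gtn_eqF // !mulr0 subrr.
Qed.

Lemma sigma_indic_setT : (0 < #|V|)%N -> sigma_indic [set: V] = 0.
Proof.
move=> V_gt0; have all_edges : e_in E [set: V] = #|E|.
  by apply: eq_card => e; rewrite inE finset.subsetT andbT.
rewrite /sigma_indic all_edges cardsT divfK ?subrr //.
by rewrite expf_neq0 // pnatr_eq0 -lt0n.
Qed.

Definition unit_indic (p : R) (U : {set V}) : V -> R :=
  scaled_indic U (#|U|%:R `^ (- p^-1)).

Section Normalization.
Variable p : R.
Hypothesis p_gt0 : 0 < p.

Local Notation N := (nV R V `^ (r%:R / p)).

Lemma lpnorm_unit_indic (U : {set V}) :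
  (0 < #|U|)%N -> lpnorm p (unit_indic p U) = 1.
Proof.
move=> U_gt0; rewrite /lpnorm /unit_indic.
have entry : `|#|U|%:R `^ (- p^-1)| `^ p = (#|U|%:R)^-1 :> R.
  rewrite ger0_norm ?powR_ge0 // -powRrM mulNr mulVf ?lt0r_neq0 //.
  by rewrite powR_inv1 ?ler0n.
rewrite (eq_bigr (fun v => scaled_indic U (#|U|%:R)^-1 v)); last first.
  move=> v _; rewrite /scaled_indic; case: ifP; rewrite ?entry //.
  by rewrite normr0 powR0 ?lt0r_neq0.
by rewrite sum_scaled_indic -[_ *+ #|U|]mulr_natr mulVf ?powR1 // pnatr_eq0 -lt0n.
Qed.

Lemma unit_indic_scale_ge1 (U : {set V}) :
  (0 < #|U|)%N -> 1 <= N * (#|U|%:R `^ (- p^-1)) ^+ r.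
Proof.
move=> U_gt0; have U_gt0' : (0 : R) < #|U|%:R by rewrite ltr0n.
rewrite -powR_mulrn ?powR_ge0 // -powRrM mulNr powRN [p^-1 * _]mulrC.
rewrite ler_pdivlMr ?powR_gt0 // mul1r.
apply: ge0_ler_powR; rewrite ?nnegrE ?ler0n //; last by rewrite ler_nat max_card.
by rewrite divr_ge0 ?ler0n ?ltW.
Qed.

Let N_ge0 : 0 <= N := powR_ge0 _ _.

Lemma scale_eq0 : #|V| = 0%N -> N = 0.
Proof.
by move=> V0; rewrite /nV V0 powR0 // mulf_neq0 ?invr_eq0 ?lt0r_neq0 ?ltr0n.
Qed.

Lemma scaled_lambda2_ge0 : 0 <= N * lambda2 r E p.
Proof.
have [/scale_eq0 -> | V_gt0] := posnP #|V|; first by rewrite mul0r.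
have unit : lpnorm p (unit_indic p [set: V]) = 1.
  by rewrite lpnorm_unit_indic // cardsT.
have := sigma_le_lambda2 p_gt0 unit.
rewrite /unit_indic sigma_scaled_indic sigma_indic_setT // mulr0 => lambda2_ge0.
by rewrite mulr_ge0.
Qed.

Lemma scaled_mu_ge0 : 0 <= N * mu r E p.
Proof.
have [/scale_eq0 -> | V_gt0] := posnP #|V|; first by rewrite mul0r.
have unit : lpnorm p (unit_indic p [set: V]) = 1.
  by rewrite lpnorm_unit_indic // cardsT.
have := normr_sigma_le_mu p_gt0 (fun i : 'I_r => unit).
by move=> /(le_trans (normr_ge0 _)) mu_ge0; rewrite mulr_ge0.
Qed.

Lemma sigma_indic_le_scaled_lambda2 U : sigma_indic U <= N * lambda2 r E p.
Proof.
have [B_lt0 | B_ge0] := ltP (sigma_indic U) 0.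
  exact: le_trans (ltW B_lt0) scaled_lambda2_ge0.
have [/sigma_indic_card0 -> | U_gt0] := posnP #|U|; first exact: scaled_lambda2_ge0.
have := sigma_le_lambda2 p_gt0 (lpnorm_unit_indic U_gt0).
rewrite /unit_indic sigma_scaled_indic => /(ler_wpM2l N_ge0).
apply: le_trans; rewrite mulrA ler_peMl //.
exact: unit_indic_scale_ge1.
Qed.

Lemma normr_sigma_indic_le_scaled_mu U : `|sigma_indic U| <= N * mu r E p.
Proof.
have [/sigma_indic_card0 -> | U_gt0] := posnP #|U|.
  by rewrite normr0 scaled_mu_ge0.
have := normr_sigma_le_mu p_gt0 (fun i : 'I_r => lpnorm_unit_indic U_gt0).
rewrite /unit_indic sigma_scaled_indic normrM ger0_norm ?exprn_ge0 ?powR_ge0 //.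
move=> /(ler_wpM2l N_ge0); apply: le_trans; rewrite mulrA ler_peMl //.
exact: unit_indic_scale_ge1.
Qed.

Lemma disc_le_scaled_lambda2 U :
  r%:R * disc R r E U - r%:R ^+ 2 * avgdeg R r E <= N * lambda2 r E p.
Proof. exact: le_trans (disc_le_sigma_indic U) (sigma_indic_le_scaled_lambda2 U). Qed.

Lemma normr_disc_le_scaled_mu U :
  r%:R * `|disc R r E U| - r%:R ^+ 2 * avgdeg R r E <= N * mu r E p.
Proof.
exact: le_trans (normr_disc_le_sigma_indic U) (normr_sigma_indic_le_scaled_mu U).
Qed.

End Normalization.
End Hypergraph.

Theorem lemma1p9 (R : realType) (r : nat) (hr : (2 <= r)%N) :
  exists C : R, 0 < C /\
  forall (V : finType) (E : {set {set V}}), @uniform V r E ->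
  forall p : R, 0 < p ->
    (@nV R V) `^ (r%:R / p) * @lambda2 R V r E p >= r%:R * @discplus R V r E - C * @avgdeg R V r E
    /\ (@nV R V) `^ (r%:R / p) * @mu R V r E p >= r%:R * @discabs R V r E - C * @avgdeg R V r E.
Proof.
have r_gt0 : (0 < r)%N by exact: leq_trans hr.
exists (r%:R ^+ 2); split; first by rewrite exprn_gt0 // ltr0n.
move=> V E E_uniform p p_gt0.
have Cd_ge0 : 0 <= r%:R ^+ 2 * avgdeg R r E by rewrite mulr_ge0 ?exprn_ge0 ?avgdeg_ge0.
split; rewrite lerBlDr; apply: mulr_bigmax_le; rewrite ?ltr0n ?addr_ge0 //.
- by apply: scaled_lambda2_ge0.
- by move=> U; rewrite -lerBlDr; apply: disc_le_scaled_lambda2.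
- by apply: scaled_mu_ge0.
- by move=> U; rewrite -lerBlDr; apply: normr_disc_le_scaled_mu.
Qed.
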